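(* Let $A\subseteq\mathbb{R}$ be nonempty and $a\in A$. For each $k\in\mathbb{N}$ let $f_k:A\to\mathbb{R}$ be weakly symmetrically continuous at $a$, and suppose $(f_k)$ converges uniformly on $A$ to a function $f:A\to\mathbb{R}$. Then $f$ is weakly symmetrically continuous at $a$.
   Context: $S_a(A)$ is the set of all sequences $(h_n)$ of positive reals converging to $0$ with $a+h_n,a-h_n\in A$ for every $n$; a function $f:A\to\mathbb{R}$ is weakly symmetrically continuous at $a$ if, whenever $S_a(A)\neq\emptyset$, there exists $(h_n)\in S_a(A)$ with $\lim_{n\to\infty}\big(f(a+h_n)-f(a-h_n)\big)=0$. *)

From Stdlib Require Import Reals.
Open Scope R_scope.

(* A subset of R is a predicate; a function A -> R is represented by a total
   function R -> R whose values outside A are irrelevant. *)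

Definition in_S (A : R -> Prop) (a : R) (h : nat -> R) : Prop :=
  (forall n, 0 < h n) /\ Un_cv h 0 /\
  (forall n, A (a + h n) /\ A (a - h n)).

Definition S_nonempty (A : R -> Prop) (a : R) : Prop :=
  exists h, in_S A a h.

Definition weakly_sym_cont (A : R -> Prop) (f : R -> R) (a : R) : Prop :=
  S_nonempty A a ->
  exists h, in_S A a h /\ Un_cv (fun n => f (a + h n) - f (a - h n)) 0.

Definition unif_cv_on (A : R -> Prop) (fk : nat -> R -> R) (f : R -> R) : Prop :=
  forall eps, 0 < eps -> exists N : nat, forall k x, (N <= k)%nat -> A x ->
    Rabs (fk k x - f x) < eps.

(* When [S_a(A)] is nonempty, weak symmetric continuity of [f] at [a] amounts
   to the existence, for every [eps > 0], of some [0 < x < eps] with [a +- x] in [A] and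
   [|f (a + x) - f (a - x)| < eps].  Given [eps], pick [k] with [f_k] uniformly
   [eps/3]-close to [f] on [A], and a symmetric pair [a +- x] at which [f_k]
   varies by less than [eps/3]; then [f] varies there by less than [eps]. *)

From Stdlib Require Import Reals Lra Lia ClassicalEpsilon.
Open Scope R_scope.

Lemma Un_cv_0_le (u v : nat -> R) :
  (forall n, Rabs (u n) <= v n) -> Un_cv v 0 -> Un_cv u 0.
Proof.
  intros Huv Hv eps Heps.
  destruct (Hv eps Heps) as [N HN].
  exists N; intros n Hn.
  specialize (HN n Hn); specialize (Huv n).
  unfold R_dist in *; rewrite Rminus_0_r in *.
  pose proof (Rle_abs (v n)); lra.
Qed.

Lemma Rabs_sub_lt_of_close (f g : R -> R) (y z e : R) :
  Rabs (g y - f y) < e -> Rabs (g z - f z) < e -> Rabs (g y - g z) < e ->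
  Rabs (f y - f z) < 3 * e.
Proof. unfold Rabs; repeat destruct Rcase_abs; lra. Qed.

Section SymmetricDifferences.

Variables (A : R -> Prop) (f : R -> R) (a : R).

Definition small_sym_diff (eps : R) : Prop :=
  exists x, 0 < x < eps /\ A (a + x) /\ A (a - x) /\
    Rabs (f (a + x) - f (a - x)) < eps.

Lemma small_sym_diff_of_weakly_sym_cont :
  S_nonempty A a -> weakly_sym_cont A f a ->
  forall eps, 0 < eps -> small_sym_diff eps.
Proof.
  intros Hne Hw eps Heps.
  destruct (Hw Hne) as [h [[Hpos [Hh HA]] Hd]].
  destruct (Hh eps Heps) as [n1 Hn1].
  destruct (Hd eps Heps) as [n2 Hn2].
  set (n := Nat.max n1 n2).
  specialize (Hn1 n ltac:(unfold n; lia)); specialize (Hn2 n ltac:(unfold n; lia)).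
  unfold R_dist in *; rewrite Rminus_0_r in Hn1, Hn2.
  specialize (Hpos n); rewrite Rabs_right in Hn1 by lra.
  exists (h n); destruct (HA n); repeat split; assumption.
Qed.

Lemma weakly_sym_cont_of_small_sym_diff :
  (forall eps, 0 < eps -> small_sym_diff eps) -> weakly_sym_cont A f a.
Proof.
  intros Hsmall _.
  destruct (choice (fun (k : nat) (x : R) => 0 < x < RinvN k /\ A (a + x) /\ A (a - x) /\
              Rabs (f (a + x) - f (a - x)) < RinvN k))
    as [h Hh].
  { intros k; exact (Hsmall (RinvN k) (cond_pos (RinvN k))). }
  exists h; split; [split; [|split]|].
  - intros n; apply (proj1 (Hh n)).
  - apply (Un_cv_0_le _ RinvN); [|exact RinvN_cv].
    intros n; destruct (Hh n) as [Hx _]; rewrite Rabs_right; lra.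
  - intros n; destruct (Hh n) as (_ & Hp & Hm & _); split; assumption.
  - apply (Un_cv_0_le _ RinvN); [|exact RinvN_cv].
    intros n; destruct (Hh n) as (_ & _ & _ & Hd); lra.
Qed.

End SymmetricDifferences.

Theorem theorem4p2 (A : R -> Prop) (a : R) (fk : nat -> R -> R) (f : R -> R) :
  (exists x, A x) -> A a ->
  (forall k, weakly_sym_cont A (fk k) a) ->
  unif_cv_on A fk f ->
  weakly_sym_cont A f a.
Proof.
  intros _ _ Hw Hu Hne.
  apply weakly_sym_cont_of_small_sym_diff; [|exact Hne].
  intros eps Heps.
  destruct (Hu (eps / 3) ltac:(lra)) as [N HN].
  destruct (small_sym_diff_of_weakly_sym_cont A (fk N) a Hne (Hw N) (eps / 3)
              ltac:(lra)) as (x & Hx & Hp & Hm & Hd).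
  exists x; repeat split; try lra; try assumption.
  replace eps with (3 * (eps / 3)) by field.
  exact (Rabs_sub_lt_of_close f (fk N) _ _ _ (HN N _ (le_n N) Hp) (HN N _ (le_n N) Hm) Hd).
Qed.
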